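(* For every $n\ge1$ there is a formula $\Phi_n'\in\mathrm{LTL}[\mathsf{F}]$ such that $\Phi_n'\equiv\Phi_n$ (i.e. $\mathcal{L}(\Phi_n')=\mathcal{L}(\Phi_n)$) and $\mathrm{size}(\Phi_n')<2^{n+1}(n+2)^2$.
   Context: Fix $n\ge1$ and atomic propositions $AP=\{\tilde p,\tilde q\}\cup\{p_1,\dots,p_n\}\cup\{q_1,\dots,q_n\}$ (all distinct), $\Sigma=2^{AP}$. Formulae are built from literals $p,\neg p$ ($p\in AP$) with $\land,\lor$ and temporal operators $\mathsf{F}$ (''at some $j$ with $i\le j<|\sigma|$'') and $\mathsf{O}$ (''at some $j$ with $0\le j\le i$''), interpreted on finite non-empty traces $\sigma\in\Sigma^+$ at positions $0\le i<|\sigma|$; $\mathcal{L}(\phi)=\{\sigma\in\Sigma^+:\sigma,0\models\phi\}$. $\mathrm{LTL}[\mathsf{F}]$ denotes formulae using only the temporal operator $\mathsf{F}$. Size: literals 1, unary operators add 1, $\mathrm{size}(\phi_1\circ\phi_2)=\mathrm{size}(\phi_1)+\mathrm{size}(\phi_2)+1$ for $\circ\in\{\land,\lor\}$. Define $\Phi_n := \mathsf{F}\big(\tilde q\land\bigwedge_{i=1}^n\big((q_i\land\mathsf{O}(\tilde p\land p_i))\lor(\neg q_i\land\mathsf{O}(\tilde p\land\neg p_i))\big)\big)$. *)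

From mathcomp Require Import all_boot.
Set Implicit Arguments. Unset Strict Implicit. Unset Printing Implicit Defensive.

(* Atomic propositions AP = {p~, q~} ∪ {p_1..p_n} ∪ {q_1..q_n};
   p_i / q_i (1 <= i <= n) are represented by P i / Q i with i : 'I_n
   (0-based index, i.e. P i stands for p_{i+1}). *)
Inductive ap (n : nat) : Type :=
| PT : ap n
| QT : ap n
| P : 'I_n -> ap n
| Q : 'I_n -> ap n.

Inductive form (A : Type) : Type :=
| Lit : bool -> A -> form A       (* Lit true a = a, Lit false a = ¬a *)
| And : form A -> form A -> form A
| Or  : form A -> form A -> form A
| Fut : form A -> form A
| Once : form A -> form A.

(* Letters of Σ = 2^AP are valuations A -> bool; traces are sequences of letters. *)
Definition letter (A : Type) := A -> bool.
Definition trace (A : Type) := seq (letter A).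

Fixpoint sat (A : Type) (s : trace A) (i : nat) (phi : form A) : Prop :=
  match phi with
  | Lit b a => (nth (fun _ => false) s i a) = b
  | And f g => sat s i f /\ sat s i g
  | Or f g => sat s i f \/ sat s i g
  | Fut f => exists j, i <= j /\ j < size s /\ sat s j f
  | Once f => exists j, j <= i /\ sat s j f
  end.

Definition lang (A : Type) (phi : form A) (s : trace A) : Prop :=
  0 < size s /\ sat s 0 phi.

Fixpoint fsize (A : Type) (phi : form A) : nat :=
  match phi with
  | Lit _ _ => 1
  | And f g => fsize f + fsize g + 1
  | Or f g => fsize f + fsize g + 1
  | Fut f => (fsize f).+1
  | Once f => (fsize f).+1
  end.

Fixpoint ltlF (A : Type) (phi : form A) : bool :=
  match phi with
  | Lit _ _ => true
  | And f g => ltlF f && ltlF g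
  | Or f g => ltlF f && ltlF g
  | Fut f => ltlF f
  | Once _ => false
  end.

Fixpoint bigAnd (A : Type) (x : form A) (xs : seq (form A)) : form A :=
  match xs with
  | [::] => x
  | y :: ys => And x (bigAnd y ys)
  end.

Definition clause (n : nat) (i : 'I_n) : form (ap n) :=
  Or (And (Lit true (Q i)) (Once (And (Lit true (PT n)) (Lit true (P i)))))
     (And (Lit false (Q i)) (Once (And (Lit true (PT n)) (Lit false (P i))))).

Definition Phi (n : nat) : form (ap n) :=
  match enum 'I_n with
  | [::] => Fut (Lit true (QT n))
  | c :: cs => Fut (And (Lit true (QT n)) (bigAnd (clause c) (map (@clause n) cs)))
  end.

From mathcomp Require Import all_boot zify.
Set Implicit Arguments. Unset Strict Implicit. Unset Printing Implicit Defensive.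

(* Fixing the values b of the q_i, Phi_n is the disjunction over b of
   F(q~ /\ q = b /\ /\_i O(p~ /\ p_i = b_i)).  At position 0 a formula
   F(psi /\ /\_i O phi_i) is equivalent to /\_i F(phi_i /\ F psi): given the
   right-hand side, the last position satisfying psi lies after every phi_i
   witness.  The resulting LTL[F] formula is a disjunction of 2^n conjunctions
   of n formulae of size 2n + 7. *)

Definition letter_at (A : Type) (s : trace A) (i : nat) : letter A :=
  nth (fun _ => false) s i.

Fixpoint bigOr (A : Type) (x : form A) (xs : seq (form A)) : form A :=
  if xs is y :: ys then Or x (bigOr y ys) else x.

Section Semantics.
Variable A : Type.
Implicit Types (s : trace A) (phi psi : form A).

Fixpoint satb s i phi : bool :=
  match phi with
  | Lit b a => letter_at s i a == b
  | And f g => satb s i f && satb s i g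
  | Or f g => satb s i f || satb s i g
  | Fut f => has (fun j => satb s j f) (index_iota i (size s))
  | Once f => has (fun j => satb s j f) (iota 0 i.+1)
  end.

Lemma satP s i phi : reflect (sat s i phi) (satb s i phi).
Proof.
elim: phi i => [b a|f IHf g IHg|f IHf g IHg|f IHf|f IHf] i /=.
- exact: eqP.
- by apply: (iffP andP) => -[/IHf Hf /IHg Hg].
- by apply: (iffP orP) => -[/IHf|/IHg]; auto.
- apply: (iffP hasP) => [[j] | [j [Hij [Hj /IHf Hf]]]].
    by rewrite mem_index_iota => /andP[Hij Hj] /IHf Hf; exists j.
  by exists j; rewrite ?mem_index_iota ?Hij //; apply/IHf.
- (* [/=] has unfolded [iota 0 i.+1] *)
  apply: (iffP (@hasP _ _ (iota 0 i.+1))) => [[j] | [j [Hji /IHf Hf]]].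
    by rewrite mem_iota add0n ltnS => /andP[_ Hji] /IHf Hf; exists j.
  by exists j; rewrite ?mem_iota ?add0n ?ltnS //; apply/IHf.
Qed.

Lemma sat_Once_mono s i j phi : i <= j -> sat s i (Once phi) -> sat s j (Once phi).
Proof. by move=> Hij [k [Hki Hk]]; exists k; split=> //; apply: leq_trans Hij. Qed.

Lemma sat_bigAnd_map (T : eqType) (f : T -> form A) s i x xs :
  sat s i (bigAnd (f x) (map f xs)) <-> {in x :: xs, forall y, sat s i (f y)}.
Proof.
elim: xs x => [|y xs IH] x.
  by split=> [Hx z | Hx]; [rewrite inE => /eqP -> | apply: Hx; rewrite inE].
split=> [[Hx /IH Hxs] z | Hxs].
  by rewrite inE => /predU1P[-> //|]; apply: Hxs.
split; first by apply: Hxs; rewrite inE eqxx.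
by apply/IH => z Hz; apply: Hxs; rewrite inE Hz orbT.
Qed.

Lemma sat_bigOr_map (T : eqType) (f : T -> form A) s i x xs :
  sat s i (bigOr (f x) (map f xs)) <-> exists2 y, y \in x :: xs & sat s i (f y).
Proof.
elim: xs x => [|y xs IH] x.
  by split=> [Hx | [z]]; [exists x; rewrite ?inE | rewrite inE => /eqP ->].
split=> [[Hx | /IH[z Hz Hfz]] | [z]].
- by exists x; rewrite ?inE ?eqxx.
- by exists z; rewrite // inE Hz orbT.
by rewrite inE => /predU1P[-> | Hz Hfz]; [left | right; apply/IH; exists z].
Qed.

Lemma sat_bigAnd_enum (T : finType) (f : T -> form A) s i x xs :
  enum T = x :: xs -> sat s i (bigAnd (f x) (map f xs)) <-> forall y, sat s i (f y).
Proof.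
move=> enumT; rewrite sat_bigAnd_map -enumT.
by split=> [Hf y | Hf y _]; [apply: Hf; rewrite mem_enum | apply: Hf].
Qed.

Lemma sat_bigOr_enum (T : finType) (f : T -> form A) s i x xs :
  enum T = x :: xs -> sat s i (bigOr (f x) (map f xs)) <-> exists y, sat s i (f y).
Proof.
move=> enumT; rewrite sat_bigOr_map -enumT.
by split=> [[y _ Hy] | [y Hy]]; exists y; rewrite ?mem_enum.
Qed.

Lemma ltlF_bigAnd_map (T : Type) (f : T -> form A) x xs :
  (forall y, ltlF (f y)) -> ltlF (bigAnd (f x) (map f xs)).
Proof. by move=> Hf; elim: xs x => [|y xs IH] x /=; rewrite ?Hf ?IH. Qed.

Lemma ltlF_bigOr_map (T : Type) (f : T -> form A) x xs :
  (forall y, ltlF (f y)) -> ltlF (bigOr (f x) (map f xs)).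
Proof. by move=> Hf; elim: xs x => [|y xs IH] x /=; rewrite ?Hf ?IH. Qed.

Lemma fsize_bigAnd_map (T : Type) (f : T -> form A) m x xs :
  (forall y, fsize (f y) = m) ->
  (fsize (bigAnd (f x) (map f xs))).+1 = m.+1 * (size xs).+1.
Proof.
move=> Hf; elim: xs x => [|y xs IH] x; first by rewrite Hf muln1.
by have := IH y; rewrite [fsize (bigAnd (f x) _)]/= Hf [size (_ :: _)]/=; nia.
Qed.

Lemma fsize_bigOr_map (T : Type) (f : T -> form A) m x xs :
  (forall y, fsize (f y) = m) ->
  (fsize (bigOr (f x) (map f xs))).+1 = m.+1 * (size xs).+1.
Proof.
move=> Hf; elim: xs x => [|y xs IH] x; first by rewrite Hf muln1.
by have := IH y; rewrite [fsize (bigOr (f x) _)]/= Hf [size (_ :: _)]/=; nia.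
Qed.

Lemma sat0_Fut_bigAnd_Once (T : eqType) (f : T -> form A) psi s x xs :
  sat s 0 (Fut (And psi (bigAnd (Once (f x)) (map (fun y => Once (f y)) xs)))) <->
  sat s 0 (bigAnd (Fut (And (f x) (Fut psi)))
                  (map (fun y => Fut (And (f y) (Fut psi))) xs)).
Proof.
split=> [[j [_ [Hj [Hpsi /(sat_bigAnd_map (fun y => Once (f y))) Honce]]]] |
         /(sat_bigAnd_map (fun y => Fut (And (f y) (Fut psi)))) Hfut].
  apply/(sat_bigAnd_map (fun y => Fut (And (f y) (Fut psi)))) => y /Honce[k [Hkj Hk]].
  by exists k; do !split=> //; [lia | exists j].
pose last_psi j := (j < size s) && satb s j psi.
have [j0 Hj0] : exists j, last_psi j.
  have [k [_ [_ [_ [j [_ [Hj /satP Hpsi]]]]]]] := Hfut x (mem_head _ _).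
  by exists j; rewrite /last_psi Hj Hpsi.
have last_psi_le j : last_psi j -> j <= size s by case/andP=> /ltnW.
case: (ex_maxnP (ex_intro _ j0 Hj0) last_psi_le) => jm /andP[Hjm /satP Hpsi] Hmax.
exists jm; do !split=> //.
apply/(sat_bigAnd_map (fun y => Once (f y))) => y /Hfut[k [_ [_ [Hk [j [Hkj [Hj /satP Hpsi']]]]]]].
apply: (@sat_Once_mono _ j); first by apply: Hmax; rewrite /last_psi Hj Hpsi'.
by exists k.
Qed.

End Semantics.

Lemma enum_cons (T : finType) (x : T) : exists y ys, enum T = y :: ys.
Proof.
have : x \in enum T by rewrite mem_enum.
by case: (enum T) => // y ys _; exists y, ys.
Qed.

Section Translation.
Variables (n : nat) (c : 'I_n) (cs : seq 'I_n).
Variables (b0 : {ffun 'I_n -> bool}) (bs : seq {ffun 'I_n -> bool}).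
Hypothesis enum_ord : enum 'I_n = c :: cs.
Hypothesis enum_val : enum {ffun 'I_n -> bool} = b0 :: bs.
Local Notation valuation := {ffun 'I_n -> bool}.
Implicit Types (s : trace (ap n)) (b : valuation).

Definition qval s j : valuation := [ffun i => letter_at s j (Q i)].

Definition plit b i : form (ap n) := And (Lit true (PT n)) (Lit (b i) (P i)).
Definition qlit b i : form (ap n) := Lit (b i) (Q i).

Definition qmatch b : form (ap n) :=
  And (Lit true (QT n)) (bigAnd (qlit b c) (map (qlit b) cs)).

Definition Phi_body b : form (ap n) :=
  And (qmatch b) (bigAnd (Once (plit b c)) (map (fun i => Once (plit b i)) cs)).

Definition witness b i : form (ap n) := Fut (And (plit b i) (Fut (qmatch b))).

Definition PhiF_disjunct b : form (ap n) := bigAnd (witness b c) (map (witness b) cs).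

Definition PhiF : form (ap n) := bigOr (PhiF_disjunct b0) (map PhiF_disjunct bs).

Lemma sat_qmatch s j b : sat s j (qmatch b) <-> letter_at s j (QT n) /\ qval s j = b.
Proof.
rewrite /= (sat_bigAnd_enum (qlit b)) //; split=> [[HQT Hq] | [HQT <-]].
  by split=> //; apply/ffunP => i; rewrite ffunE; apply: Hq.
by split=> // i; rewrite /= ffunE.
Qed.

Lemma sat_clause s j i : sat s j (clause i) <-> sat s j (Once (plit (qval s j) i)).
Proof.
rewrite /= ffunE; case Hq: (letter_at s j (Q i)); rewrite /letter_at in Hq.
  by split=> [[[_ Hk] | [Hq' _]] | Hk]; [| rewrite Hq in Hq' | left].
by split=> [[[Hq' _] | [_ Hk]] | Hk]; [rewrite Hq in Hq' | | right].
Qed.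

Lemma sat_Phi s : sat s 0 (Phi n) <-> exists b, sat s 0 (Fut (Phi_body b)).
Proof.
have sat_body j : sat s j (And (Lit true (QT n)) (bigAnd (clause c) (map (@clause n) cs)))
                  <-> exists b, sat s j (Phi_body b).
  rewrite /= (sat_bigAnd_enum (@clause n)) //; split=> [[HQT Hcl] | [b [Hq Hpl]]].
    exists (qval s j); split; first exact/sat_qmatch.
    by apply/(sat_bigAnd_enum (fun i => Once (plit _ i))) => // i; apply/sat_clause.
  move/sat_qmatch: Hq => [HQT Eb]; split=> // i; apply/sat_clause; rewrite Eb.
  by move/(sat_bigAnd_enum (fun i => Once (plit b i))): Hpl; apply.
rewrite /Phi enum_ord; split=> [[j [_ [Hj /sat_body[b Hb]]]] | [b [j [_ [Hj Hb]]]]].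
  by exists b, j.
by exists j; split=> //; split=> //; apply/sat_body; exists b.
Qed.

Lemma lang_PhiF s : lang PhiF s <-> lang (Phi n) s.
Proof.
rewrite /lang sat_Phi (sat_bigOr_enum PhiF_disjunct) //.
by split=> -[Hs [b Hb]]; split=> //; exists b; apply/sat0_Fut_bigAnd_Once.
Qed.

Lemma ltlF_PhiF : ltlF PhiF.
Proof.
apply: ltlF_bigOr_map => b; apply: ltlF_bigAnd_map => i /=.
exact: ltlF_bigAnd_map.
Qed.

Lemma fsize_PhiF : (fsize PhiF).+1 = 2 ^ n * (n * (2 * n + 8)).
Proof.
have size_cs : (size cs).+1 = n by have := size_enum_ord n; rewrite enum_ord.
have size_bs : (size bs).+1 = 2 ^ n.
  by have := card_ffun 'I_n bool; rewrite cardE enum_val card_bool card_ord.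
have fsize_qlits b : (fsize (bigAnd (qlit b c) (map (qlit b) cs))).+1 = 2 * n.
  by rewrite (fsize_bigAnd_map (m := 1)) // size_cs.
have fsize_witness b i : fsize (witness b i) = 2 * n + 7.
  by have := fsize_qlits b; rewrite /=; lia.
have fsize_PhiF_disjunct b : (fsize (PhiF_disjunct b)).+1 = n * (2 * n + 8).
  by rewrite /PhiF_disjunct (fsize_bigAnd_map (m := 2 * n + 7)) ?size_cs; [lia|].
rewrite (fsize_bigOr_map (m := fsize (PhiF_disjunct b0))) => [|b].
  by rewrite fsize_PhiF_disjunct size_bs mulnC.
by apply: succn_inj; rewrite !fsize_PhiF_disjunct.
Qed.

End Translation.

Theorem lemma1 (n : nat) (hn : 1 <= n) :
  exists phi' : form (ap n),
    ltlF phi' /\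
    (forall s : trace (ap n), lang phi' s <-> lang (Phi n) s) /\
    fsize phi' < 2 ^ n.+1 * (n + 2) ^ 2.
Proof.
have [c [cs enum_ord]] := enum_cons (Ordinal hn).
have [b0 [bs enum_val]] := enum_cons [ffun _ : 'I_n => true].
exists (PhiF c cs b0 bs); split; first exact: ltlF_PhiF.
split; first exact: lang_PhiF.
have := fsize_PhiF enum_ord enum_val; rewrite expnS; nia.
Qed.
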